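(* Let $G$ be a finite group and $X$ any $E\mathcal M$-$G$-simplicial set. Then the inclusion $X^\mu\hookrightarrow X$ is a $G$-global weak equivalence.
   Context: $\omega=\{1,2,\dots\}$, $\mathcal M$ the monoid of injections $\omega\to\omega$, $\mathcal M_A$ those fixing $A\subset\omega$ pointwise; $A$ co-infinite if $\omega\setminus A$ is infinite. $E\mathcal M$ is the simplicial monoid with $(E\mathcal M)_n=\mathcal M^{1+n}$ (pointwise multiplication, structure maps by precomposition), and $\mathcal M$ embeds diagonally into each $(E\mathcal M)_n$. An $E\mathcal M$-$G$-simplicial set is a simplicial set with $(E\mathcal M\times G)$-action. $x\in X_n$ is $k$-supported on $A$ if $i_k(u).x=x$ for all $u\in\mathcal M_A$ ($i_k$ inclusion of the $(1+k)$-th factor); $X^\mu\subset X$ is the $(E\mathcal M\times G)$-simplicial subset of simplices that for every $k$ are $k$-supported on some co-infinite set. A finite subgroup $H\subset\mathcal M$ is universal if every countable $H$-set embeds $H$-equivariantly into $\omega$. A map $f$ is a $G$-global weak equivalence if for all universal $H\subset\mathcal M$ and all homomorphisms $\phi\colon H\to G$ the induced map on fixed points of the graph subgroup $\{(h,\phi(h))\}\subset\mathcal M\times G$ is a weak homotopy equivalence. *)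

From mathcomp Require Import all_boot all_fingroup.
From Stdlib Require Import Relations ProofIrrelevance.

Set Implicit Arguments.
Unset Strict Implicit.
Unset Printing Implicit Defensive.

(* The simplex category: monotone maps [m] -> [n], [m] = 'I_m.+1.      *)

Definition mono (m n : nat) : Type :=
  {f : 'I_m.+1 -> 'I_n.+1 | forall i j : 'I_m.+1, i <= j -> f i <= f j}.

Definition comp_mono m n p (g : mono n p) (f : mono m n) : mono m p.
Proof.
exists (fun i => sval g (sval f i)).
by move=> i j hij; apply: (svalP g); apply: (svalP f).
Defined.

Definition delta n (i : 'I_n.+2) : mono n n.+1.
Proof. exists (lift i) => j k hjk /=. by rewrite leq_bump2. Defined.

Definition const_mono m (e : 'I_2) : mono m 1.
Proof. exists (fun _ => e) => i j _. exact: leqnn. Defined.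

Record sSet : Type := SSet {
  sx :> nat -> Type;
  sact : forall m n, mono m n -> sx n -> sx m;
  sact_id : forall n (f : mono n n) (x : sx n),
      (forall i, sval f i = i) -> sact f x = x;
  sact_comp : forall m n p (f : mono m n) (g : mono n p) (h : mono m p)
      (x : sx p), (forall i, sval h i = sval g (sval f i)) ->
      sact h x = sact f (sact g x) }.
Arguments sact s {m n} f x.

Record smap (A B : sSet) : Type := SMap {
  smf :> forall n, A n -> B n;
  smf_nat : forall m n (f : mono m n) (x : A n),
      smf (sact A f x) = sact B f (smf x) }.

Definition scomp (A B C : sSet) (g : smap B C) (f : smap A B) : smap A C.
Proof.
exists (fun n x => g n (f n x)).
by move=> m n h x; rewrite smf_nat smf_nat.
Defined.

(* Kan complexes: every horn Lambda^{n+1}_k -> K has a filler.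
   A horn is a family of n-simplices y_i (i <> k) which agrees on the
   pairwise intersections of the faces. *)
Definition is_horn (K : sSet) n (k : 'I_n.+2)
    (y : forall i : 'I_n.+2, i != k -> K n) : Prop :=
  forall m (i j : 'I_n.+2) (hi : i != k) (hj : j != k) (f g : mono m n),
    (forall t, lift i (sval f t) = lift j (sval g t)) ->
    sact K f (y i hi) = sact K g (y j hj).

Definition Kan (K : sSet) : Prop :=
  forall n (k : 'I_n.+2) (y : forall i : 'I_n.+2, i != k -> K n),
    is_horn y ->
    exists x : K n.+1, forall i (hi : i != k), sact K (delta i) x = y i hi.

(* An edge in Fun(A,K) from phi to psi: a map A x Delta^1 -> K
   restricting to phi at vertex 0 and to psi at vertex 1. *)
Definition homotopic (A K : sSet) (phi psi : smap A K) : Prop :=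
  exists H : forall n, A n -> mono n 1 -> K n,
    (forall m n (f : mono m n) (x : A n) (s : mono n 1),
        H m (sact A f x) (comp_mono s f) = sact K f (H n x s)) /\
    (forall n (x : A n), H n x (const_mono n ord0) = phi n x) /\
    (forall n (x : A n), H n x (const_mono n ord_max) = psi n x).

Definition same_pi0 (A K : sSet) : relation (smap A K) :=
  clos_refl_sym_trans (smap A K) (@homotopic A K).

(* Weak homotopy equivalence (Kerodon, Def. 3.1.6.12): for every Kan
   complex K, i^* : pi_0 Fun(B,K) -> pi_0 Fun(A,K) is bijective. *)
Definition weak_equiv (A B : sSet) (i : smap A B) : Prop :=
  forall K : sSet, Kan K ->
    (forall alpha : smap A K, exists beta : smap B K,
        same_pi0 (scomp beta i) alpha) /\
    (forall beta1 beta2 : smap B K,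
        same_pi0 (scomp beta1 i) (scomp beta2 i) -> same_pi0 beta1 beta2).

Definition simp_closed (X : sSet) (P : forall n, X n -> Prop) : Prop :=
  forall m n (f : mono m n) (x : X n), P n x -> P m (sact X f x).

Lemma sig_eq_val (T : Type) (P : T -> Prop) (x y : {t : T | P t}) :
  sval x = sval y -> x = y.
Proof.
case: x y => [x px] [y py] /= exy; subst y.
by rewrite (proof_irrelevance _ px py).
Qed.

Definition sub_sSet (X : sSet) (P : forall n, X n -> Prop)
    (cP : simp_closed P) : sSet.
Proof.
refine (@SSet (fun n => {x : X n | P n x})
  (fun m n f x => exist _ (sact X f (sval x)) (cP m n f _ (svalP x))) _ _).
- by move=> n f x hf; apply: sig_eq_val; rewrite /= sact_id.
- by move=> m n p f g h x hh; apply: sig_eq_val; rewrite /= (sact_comp _ hh).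
Defined.

Definition sub_incl (X : sSet) (P Q : forall n, X n -> Prop)
    (cP : simp_closed P) (cQ : simp_closed Q)
    (sPQ : forall n x, P n x -> Q n x) : smap (sub_sSet cP) (sub_sSet cQ).
Proof.
exists (fun n x => exist _ (sval x) (sPQ n _ (svalP x))).
by move=> m n f x; apply: sig_eq_val.
Defined.

(* The inclusion of simplicial subsets P c Q of X is a weak equivalence
   (this includes the assertion that P and Q are simplicial subsets). *)
Definition incl_weak_equiv (X : sSet) (P Q : forall n, X n -> Prop) : Prop :=
  exists (cP : simp_closed P) (cQ : simp_closed Q)
         (sPQ : forall n x, P n x -> Q n x),
    weak_equiv (sub_incl cP cQ sPQ).

(* The monoid M of injections omega -> omega (omega relabelled as nat: *)
(* n <-> n+1) and E M - G - simplicial sets.                            *)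

Definition Minj : Type := {u : nat -> nat | injective u}.
Definition Mone : Minj := exist _ id (@inj_id nat).

Local Open Scope group_scope.

(* (E M)_n = M^{1+n} = functions 'I_n.+1 -> Minj, pointwise product;
   structure maps by precomposition. An action of E M x G on X. *)
Record EMGsSet (gT : finGroupType) : Type := EMGSSet {
  emg_sset :> sSet;
  ea : forall n, ('I_n.+1 -> Minj) -> gT -> emg_sset n -> emg_sset n;
  ea_one : forall n (a : 'I_n.+1 -> Minj) (x : emg_sset n),
      (forall i y, sval (a i) y = y) -> ea a 1 x = x;
  ea_mul : forall n (a b c : 'I_n.+1 -> Minj) (g h : gT) (x : emg_sset n),
      (forall i y, sval (c i) y = sval (a i) (sval (b i) y)) ->
      ea c (g * h) x = ea a g (ea b h x);
  ea_nat : forall m n (f : mono m n) (a : 'I_n.+1 -> Minj) (g : gT)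
      (x : emg_sset n),
      sact emg_sset f (ea a g x) = ea (fun i => a (sval f i)) g (sact emg_sset f x) }.
Arguments ea {gT} e {n} a g x.

Definition ik n (k : 'I_n.+1) (u : Minj) : 'I_n.+1 -> Minj :=
  fun i => if i == k then u else Mone.

Definition k_supported gT (X : EMGsSet gT) n (k : 'I_n.+1)
    (A : nat -> Prop) (x : X n) : Prop :=
  forall u : Minj, (forall a, A a -> sval u a = a) -> ea X (ik k u) 1 x = x.

Definition coinfinite (A : nat -> Prop) : Prop :=
  forall N, exists m, N <= m /\ ~ A m.

Definition Xmu gT (X : EMGsSet gT) (n : nat) (x : X n) : Prop :=
  forall k : 'I_n.+1, exists A, coinfinite A /\ k_supported k A x.

Arguments Xmu {gT} X n x.

(* Finite subgroups of M, given as injective monoid homomorphisms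
   iota : H -> M from a finite group H. *)
Definition Memb (hT : finGroupType) (iota : hT -> Minj) : Prop :=
  [/\ forall x z : hT, (forall y, sval (iota x) y = sval (iota z) y) -> x = z,
      forall y, sval (iota 1) y = y &
      forall (x z : hT) y, sval (iota (x * z)) y = sval (iota x) (sval (iota z) y)].

Definition universal (hT : finGroupType) (iota : hT -> Minj) : Prop :=
  forall (S : Type) (act : hT -> S -> S),
    (forall s, act 1 s = s) ->
    (forall x z s, act (x * z) s = act x (act z s)) ->
    (exists c : S -> nat, injective c) ->
    exists e : S -> nat, injective e /\
      forall h s, e (act h s) = sval (iota h) (e s).

(* fixed points of the graph subgroup {(h, phi h)} (h acting diagonally) *)
Definition graph_fixed gT (X : EMGsSet gT) (hT : finGroupType)
    (iota : hT -> Minj) (phi : hT -> gT) (n : nat) (x : X n) : Prop :=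
  forall h : hT, ea X (fun _ => iota h) (phi h) x = x.

Arguments graph_fixed {gT} X {hT} iota phi n x.

Definition G_global_weq_incl {gT} (X : EMGsSet gT)
    (P : forall n, X n -> Prop) : Prop :=
  forall (hT : finGroupType) (iota : hT -> Minj),
    Memb iota -> universal iota ->
    forall phi : hT -> gT, (forall x z, phi (x * z) = phi x * phi z) ->
      incl_weak_equiv (fun n x => P n x /\ graph_fixed X iota phi n x)
                      (graph_fixed X iota phi).
Arguments G_global_weq_incl {gT} X P.

(* The edge (1, u) of the contractible simplicial monoid E M acts on X as a 1-simplex
   from x to u.x, natural in x.  If u commutes with the finite subgroup H, this
   homotopy stays inside the fixed points of every graph subgroup.  If moreover u
   has co-infinite image, then u.x is supported on that image at every vertex, and
   along the edge each vertex of x is either moved by u or keeps its support, so the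
   homotopy also preserves X^mu.  Hence acting by u is a homotopy inverse of the
   inclusion of X^mu on fixed points.  Universality of H provides such a u: embed the
   H-set omega x {0, 1} into omega and restrict to omega x {0}. *)
From mathcomp Require Import all_boot all_fingroup.
From Stdlib Require Import Relations ProofIrrelevance FunctionalExtensionality.
From Stdlib Require Import ClassicalEpsilon.

Set Implicit Arguments.
Unset Strict Implicit.
Unset Printing Implicit Defensive.

Definition sid (A : sSet) : smap A A := @SMap A A (fun n x => x) (fun _ _ _ _ => erefl).

Lemma smap_ext (A B : sSet) (p q : smap A B) : (forall n x, p n x = q n x) -> p = q.
Proof.
case: p q => [p pn] [q qn] /= pq.
have {}pq : p = q.
  by apply: functional_extensionality_dep => n; apply: functional_extensionality.
by subst q; congr SMap; apply: proof_irrelevance.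
Qed.

Lemma scompA (A B C D : sSet) (h : smap C D) (g : smap B C) (f : smap A B) :
  scomp h (scomp g f) = scomp (scomp h g) f.
Proof. exact: smap_ext. Qed.

Lemma scomp_sid (A B : sSet) (f : smap A B) : scomp f (sid A) = f.
Proof. exact: smap_ext. Qed.

Lemma same_pi0_map (A B A' B' : sSet) (F : smap A B -> smap A' B') :
  (forall phi psi, homotopic phi psi -> homotopic (F phi) (F psi)) ->
  forall phi psi, same_pi0 phi psi -> same_pi0 (F phi) (F psi).
Proof.
move=> hF phi psi; elim=> [x y hxy|x|x y _ ih|x y z _ ih1 _ ih2].
- exact/rst_step/hF.
- exact: rst_refl.
- exact: rst_sym.
- exact: rst_trans _ _ _ _ _ ih1 ih2.
Qed.

Lemma homotopic_postcomp (A B K : sSet) (g : smap B K) (phi psi : smap A B) :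
  homotopic phi psi -> homotopic (scomp g phi) (scomp g psi).
Proof.
case=> H [Hnat [H0 H1]]; exists (fun n x s => g n (H n x s)); split; [|split].
- by move=> m n f x s /=; rewrite Hnat smf_nat.
- by move=> n x /=; rewrite H0.
- by move=> n x /=; rewrite H1.
Qed.

Lemma homotopic_precomp (A B K : sSet) (h : smap A B) (phi psi : smap B K) :
  homotopic phi psi -> homotopic (scomp phi h) (scomp psi h).
Proof.
case=> H [Hnat [H0 H1]]; exists (fun n x s => H n (h n x) s); split; [|split].
- by move=> m n f x s /=; rewrite smf_nat Hnat.
- by move=> n x /=; rewrite H0.
- by move=> n x /=; rewrite H1.
Qed.

Lemma same_pi0_postcomp (A B K : sSet) (g : smap B K) (phi psi : smap A B) :
  same_pi0 phi psi -> same_pi0 (scomp g phi) (scomp g psi).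
Proof. exact: (same_pi0_map (F := scomp g) (@homotopic_postcomp A B K g)). Qed.

Lemma same_pi0_precomp (A B K : sSet) (h : smap A B) (phi psi : smap B K) :
  same_pi0 phi psi -> same_pi0 (scomp phi h) (scomp psi h).
Proof.
exact: (same_pi0_map (F := fun phi : smap B K => scomp phi h) (@homotopic_precomp A B K h)).
Qed.

Lemma homotopy_equiv_weak_equiv (A B : sSet) (i : smap A B) (f : smap B A) :
  same_pi0 (scomp f i) (sid A) -> same_pi0 (scomp i f) (sid B) -> weak_equiv i.
Proof.
move=> fi_id if_id K _; split.
- move=> alpha; exists (scomp alpha f).
  rewrite -scompA -{2}(scomp_sid alpha).
  exact: same_pi0_postcomp.
- move=> beta1 beta2 /(same_pi0_precomp f); rewrite -!scompA => h12.
  have h1 := same_pi0_postcomp beta1 if_id; have h2 := same_pi0_postcomp beta2 if_id.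
  rewrite scomp_sid in h1; rewrite scomp_sid in h2.
  exact: rst_trans _ _ _ _ _ (rst_sym _ _ _ _ h1) (rst_trans _ _ _ _ _ h12 h2).
Qed.

Definition Mimage (u : Minj) (a : nat) : Prop := exists n, sval u n = a.

Definition Mcomp (u v : Minj) : Minj :=
  exist _ (sval u \o sval v) (inj_comp (svalP u) (svalP v)).

Lemma injective_unbounded (e : nat -> nat) : injective e -> forall N, exists j, N <= e j.
Proof.
move=> inj_e N.
case: (boolP [exists j : 'I_N.+1, N <= e j]) => [/existsP [j hj]|/existsPn small].
  by exists j.
have lt_eN (j : 'I_N.+1) : e j < N by rewrite ltnNge small.
have inj_f : injective (fun j : 'I_N.+1 => Ordinal (lt_eN j)).
  by move=> j k /(congr1 val) /inj_e /val_inj.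
by have := leq_card _ inj_f; rewrite !card_ord ltnn.
Qed.

Lemma coinfinite_increasing_enum (A : nat -> Prop) : coinfinite A ->
  exists c : nat -> nat, (forall i, ~ A (c i)) /\ {mono c : i j / i <= j}.
Proof.
move=> /choice [next next_spec].
pose c := fix c i := if i is i'.+1 then next (c i').+1 else next 0.
exists c; split; first by case=> [|i]; apply: (next_spec _).2.
by apply: leq_mono; apply: (homo_ltn ltn_trans) => i; apply: (next_spec _).1.
Qed.

Lemma coinfinite_fixing_injection (A : nat -> Prop) : coinfinite A ->
  exists w : Minj, (forall a, A a -> sval w a = a) /\ coinfinite (Mimage w).
Proof.
move=> /coinfinite_increasing_enum [c [c_notA c_mono]].
have inj_c := incn_inj c_mono.
have c_ge i : i <= c i.
  by elim: i => // i ih; apply: leq_ltn_trans ih _; rewrite ltnNge c_mono -ltnNge.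
pose w n := if excluded_middle_informative (A n) then n else c n.*2.
have wA n : A n -> w n = n by rewrite /w; case: excluded_middle_informative.
have wNA n : ~ A n -> w n = c n.*2 by rewrite /w; case: excluded_middle_informative.
have inj_w : injective w.
  move=> a b; case: (classic (A a)) => ha; case: (classic (A b)) => hb.
  - by rewrite !wA.
  - by rewrite wA // wNA // => eab; case: (c_notA b.*2); rewrite -eab.
  - by rewrite wNA // wA // => eab; case: (c_notA a.*2); rewrite eab.
  - by rewrite !wNA // => /inj_c /double_inj.
exists (exist _ w inj_w); split => [a|N]; first exact: wA.
exists (c N.*2.+1); split.
  by apply: leq_trans (c_ge _); rewrite ltnW // ltnS -addnn leq_addr.
case=> n /=; case: (classic (A n)) => hn.
  by rewrite wA // => e; case: (c_notA N.*2.+1); rewrite -e.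
by rewrite wNA // => /inj_c /(congr1 odd); rewrite /= !odd_double.
Qed.

Lemma universal_commuting_injection (hT : finGroupType) (iota : hT -> Minj) :
  Memb iota -> universal iota ->
  exists u : Minj, (forall h n, sval u (sval (iota h) n) = sval (iota h) (sval u n)) /\
     coinfinite (Mimage u).
Proof.
case=> _ iota1 iotaM univ.
have [|||e [inj_e e_equiv]] := univ (nat * bool)%type (fun h s => (sval (iota h) s.1, s.2)).
- by case=> n b /=; rewrite iota1.
- by move=> x z [n b] /=; rewrite iotaM.
- by exists pickle; apply: pcan_inj pickleK_inv.
have inj_u : injective (fun n => e (n, false)) by move=> a b /inj_e [].
exists (exist _ _ inj_u); split => [h n|N] /=; first by rewrite -e_equiv.
have inj_e1 : injective (fun n => e (n, true)) by move=> a b /inj_e [].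
have [j hj] := injective_unbounded inj_e1 N.
by exists (e (j, true)); split => // -[n /= /inj_e].
Qed.

Section EMAction.

Variables (gT : finGroupType) (X : EMGsSet gT).

(* The n-simplex of E M that is the image of s : [n] -> [1] under the edge (1, u). *)
Definition em_path (u : Minj) n (s : mono n 1) : 'I_n.+1 -> Minj :=
  fun i => if sval s i == ord0 then Mone else u.

Lemma em_path_const0 u n (x : X n) : ea X (em_path u (const_mono n ord0)) 1 x = x.
Proof. by rewrite ea_one // => i y; rewrite /em_path eqxx. Qed.

Lemma em_path_nat u m n (f : mono m n) (s : mono n 1) (x : X n) :
  ea X (em_path u (comp_mono s f)) 1 (sact X f x) = sact X f (ea X (em_path u s) 1 x).
Proof. by rewrite ea_nat. Qed.

Lemma k_supported_em_path_image u n (s : mono n 1) (x : X n) (k : 'I_n.+1) :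
  sval s k != ord0 -> k_supported k (Mimage u) (ea X (em_path u s) 1 x).
Proof.
move=> sk v v_fix; rewrite -(@ea_mul _ _ _ (ik k v) (em_path u s) (em_path u s)) ?mulg1 //.
move=> i y; rewrite /ik /em_path; case: (eqVneq i k) => [->|//] /=.
by rewrite (negbTE sk) v_fix //; exists y.
Qed.

Lemma k_supported_em_path u n (s : mono n 1) (x : X n) (k : 'I_n.+1) A :
  sval s k == ord0 -> k_supported k A x -> k_supported k A (ea X (em_path u s) 1 x).
Proof.
move=> sk x_supp v v_fix.
pose c i := Mcomp (em_path u s i) (ik k v i).
have commute_k i y : sval (c i) y = sval (ik k v i) (sval (em_path u s i) y).
  by rewrite /c /ik /em_path /=; case: (eqVneq i k) => [->|] //=; rewrite sk.
rewrite -[1%g]mulg1 -(ea_mul _ _ _ commute_k).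
by rewrite (@ea_mul _ _ _ (em_path u s) (ik k v) c) // mulg1 x_supp.
Qed.

Lemma Xmu_em_path u n (s : mono n 1) (x : X n) : coinfinite (Mimage u) ->
  (forall k, sval s k == ord0 -> exists A, coinfinite A /\ k_supported k A x) ->
  Xmu X n (ea X (em_path u s) 1 x).
Proof.
move=> cu x_supp k; case: (boolP (sval s k == ord0)) => sk.
  by have [A [cA hA]] := x_supp k sk; exists A; split => //; apply: k_supported_em_path.
by exists (Mimage u); split => //; apply: k_supported_em_path_image.
Qed.

(* A face map f may identify k with other vertices, so f^* x is only fixed by w
   placed on the whole fibre of f k; if w fixes A and v fixes the image of w, then
   v placed at k alone still acts trivially. *)
Lemma Xmu_closed : simp_closed (Xmu X).
Proof.
move=> m n f x x_mu k.
have [A [cA hA]] := x_mu (sval f k).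
have [w [w_fix cw]] := coinfinite_fixing_injection cA.
exists (Mimage w); split => // v v_fix.
pose wf i := ik (sval f k) w (sval f i).
have wf_x : ea X wf 1 (sact X f x) = sact X f x by rewrite -ea_nat hA.
rewrite -{1}wf_x -(@ea_mul _ _ _ (ik k v) wf wf) ?mulg1 // => i y.
rewrite /wf /ik; case: (eqVneq i k) => [->|//].
by rewrite !eqxx v_fix //; exists y.
Qed.

Lemma homotopic_sid_em_path u (P : forall n, X n -> Prop) (cP : simp_closed P) :
  (forall n s x, P n x -> P n (ea X (em_path u s) 1 x)) ->
  forall F : smap (sub_sSet cP) (sub_sSet cP),
  (forall n x, sval (F n x) = ea X (em_path u (const_mono n ord_max)) 1 (sval x)) ->
  homotopic (sid _) F.
Proof.
move=> P_stable F F_val.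
exists (fun n x s => exist _ _ (P_stable n s _ (svalP x)) : sub_sSet cP n).
split; [|split] => [m n f x s|n x|n x]; apply: sig_eq_val => /=.
- exact: em_path_nat.
- exact: em_path_const0.
- by rewrite F_val.
Qed.

End EMAction.

Section GraphFixedPoints.

Variables (gT : finGroupType) (X : EMGsSet gT).
Variables (hT : finGroupType) (iota : hT -> Minj) (phi : hT -> gT).

Lemma graph_fixed_closed : simp_closed (graph_fixed X iota phi).
Proof. by move=> m n f x x_fix h; rewrite -[in RHS](x_fix h) ea_nat. Qed.

Definition Xmu_fixed n (x : X n) : Prop := Xmu X n x /\ graph_fixed X iota phi n x.

Lemma Xmu_fixed_closed : simp_closed Xmu_fixed.
Proof.
move=> m n f x [x_mu x_fix]; split; first exact: Xmu_closed.
exact: graph_fixed_closed.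
Qed.

Variable u : Minj.
Hypothesis u_commute : forall h n, sval u (sval (iota h) n) = sval (iota h) (sval u n).
Hypothesis u_coinfinite : coinfinite (Mimage u).

Lemma graph_fixed_em_path n (s : mono n 1) (x : X n) :
  graph_fixed X iota phi n x -> graph_fixed X iota phi n (ea X (em_path u s) 1 x).
Proof.
move=> x_fix h; pose c i := Mcomp (iota h) (em_path u s i).
rewrite -{2}(x_fix h) -(@ea_mul _ _ _ _ _ c) // -(@ea_mul _ _ _ _ _ c) ?mulg1 ?mul1g // => i y.
by rewrite /c /em_path; case: ifP => //= _; rewrite u_commute.
Qed.

Lemma Xmu_fixed_em_path n (s : mono n 1) (x : X n) :
  Xmu_fixed x -> Xmu_fixed (ea X (em_path u s) 1 x).
Proof.
case=> x_mu x_fix; split; last exact: graph_fixed_em_path.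
by apply: Xmu_em_path => // k _; apply: x_mu.
Qed.

Lemma Xmu_fixed_em_shift n (x : X n) :
  graph_fixed X iota phi n x -> Xmu_fixed (ea X (em_path u (const_mono n ord_max)) 1 x).
Proof. by split; [apply: Xmu_em_path | apply: graph_fixed_em_path]. Qed.

Definition em_shift : smap (sub_sSet graph_fixed_closed) (sub_sSet Xmu_fixed_closed).
Proof.
exists (fun n x => exist _ _ (Xmu_fixed_em_shift (svalP x))).
by move=> m n f x; apply: sig_eq_val; rewrite /= ea_nat.
Defined.

Lemma incl_weak_equiv_Xmu_fixed : incl_weak_equiv Xmu_fixed (graph_fixed X iota phi).
Proof.
exists Xmu_fixed_closed, graph_fixed_closed, (fun n x x_mu => proj2 x_mu).
apply: (homotopy_equiv_weak_equiv (f := em_shift)); apply/rst_sym/rst_step.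
- exact: homotopic_sid_em_path Xmu_fixed_em_path _ _.
- exact: homotopic_sid_em_path graph_fixed_em_path _ _.
Qed.

End GraphFixedPoints.

Theorem corollary3p14 (gT : finGroupType) (X : EMGsSet gT) :
  G_global_weq_incl X (Xmu X).
Proof.
(* The homotopy preserves the fixed points of {(h, phi h)} for any map phi. *)
move=> hT iota iota_emb iota_univ phi _.
have [u [u_commute u_coinfinite]] := universal_commuting_injection iota_emb iota_univ.
exact: incl_weak_equiv_Xmu_fixed u_commute u_coinfinite.
Qed.
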